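(* Consider the algorithm ECCom described in the context, and fix an epoch $i$. If $f_N^{i'}+f_L^{i'}\le 1/4$, then with high probability $f_N^{i}+f_L^{i}\le 1/3$.
   Context: Setting. A dynamic system of IDs with at least $n_0$ good IDs at all times; ''with high probability'' means with probability at least $1-n_0^{-c'}$ for a desired constant $c'$ (relative to a lifetime of $O(n_0^{\gamma})$ events, $\gamma\ge1$ a constant). A committee runs algorithm ECCom: it maintains $\mathcal S_{\mathrm{old}}$, the set of IDs present after the most recent purge (start of the epoch), and $\mathcal S$, the current set of IDs. It uses a hash function $h'$, unknown to the IDs and behaving as a uniformly random function to $[0,1)$, and places an ID $v$ in the sample when $h'(v)\le c\log n_0/|\mathcal S_{\mathrm{old}}|$, where $c>0$ is a sufficiently large constant depending on $\gamma$. The sample set $\mathcal S'_{\mathrm{old}}$ consists of the sampled IDs of $\mathcal S_{\mathrm{old}}$ at the start of the epoch; the current sample set $\mathcal S'$ consists of the sampled IDs currently present (sampled newly joined IDs are added, departed IDs removed). A purge is triggered when $|(\mathcal S'\cup\mathcal S'_{\mathrm{old}})\setminus(\mathcal S'\cap\mathcal S'_{\mathrm{old}})|\ge|\mathcal S'_{\mathrm{old}}|/4$. Notation. For epoch $i$: $f_N^i$ is the fraction (relative to $|\mathcal S_{\mathrm{old}}|$) of IDs that joined during the epoch and remain active, and $f_L^i$ is the fraction of IDs of $\mathcal S_{\mathrm{old}}$ that have left; $f_N^{i'}$ and $f_L^{i'}$ are the corresponding fractions for the sample sets (relative to $|\mathcal S'_{\mathrm{old}}|$, counting sampled new IDs remaining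 in $\mathcal S'$ and IDs of $\mathcal S'_{\mathrm{old}}$ that have left). *)

From HB Require Import structures.
From mathcomp Require Import all_boot all_order all_algebra.
From mathcomp Require Import reals exp.
Set Implicit Arguments. Unset Strict Implicit. Unset Printing Implicit Defensive.
Import Order.TTheory GRing.Theory Num.Theory.
Local Open Scope ring_scope.

Section ECCom.
Variables (R : realType) (T : finType).

(* Sampling threshold of ECCom: v is sampled iff h'(v) <= c log n0 / |S_old|.
   Since h'(v) is uniform on [0,1), this event has probability min(1, thr). *)
Definition samp_prob (c : R) (n0 : nat) (Sold : {set T}) : R :=
  Num.min 1 (c * ln (n0%:R) / #|Sold|%:R).

(* Law of the random sample set X = {v | h'(v) <= thr}: independent
   inclusions with probability p; Pr[E] = sum over X satisfying E. *)
Definition sampleP (p : R) (E : pred {set T}) : R :=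
  \sum_(X : {set T} | E X) p ^+ #|X| * (1 - p) ^+ (#|T| - #|X|).

Definition fN (Sold S : {set T}) : R := #|S :\: Sold|%:R / #|Sold|%:R.
Definition fL (Sold S : {set T}) : R := #|Sold :\: S|%:R / #|Sold|%:R.

Definition fN' (X Sold S : {set T}) : R := fN (Sold :&: X) (S :&: X).
Definition fL' (X Sold S : {set T}) : R := fL (Sold :&: X) (S :&: X).

Definition purge (X Sold S : {set T}) : bool :=
  #|(S :&: X :|: Sold :&: X) :\: (S :&: X :&: (Sold :&: X))|%:R
    >= #|Sold :&: X|%:R / 4%:R :> R.

Definition bad_epoch (S : nat -> {set T}) (Tend : nat) (X : {set T}) : bool :=
  [exists t : 'I_Tend.+1,
    [&& [forall s : 'I_Tend.+1, (s < t)%N ==> ~~ purge X (S 0%N) (S s)],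
        fN' X (S 0%N) (S t) + fL' X (S 0%N) (S t) <= 1 / 4%:R &
        1 / 3%:R < fN (S 0%N) (S t) + fL (S 0%N) (S t)]].

End ECCom.

From HB Require Import structures.
From mathcomp Require Import all_boot all_order all_algebra.
From mathcomp Require Import reals exp sequences.
From mathcomp Require Import ring lra.
Set Implicit Arguments.
Unset Strict Implicit.
Unset Printing Implicit Defensive.
Import Order.TTheory GRing.Theory Num.Theory.
Local Open Scope ring_scope.

(* Sampling puts each ID in the sample independently with probability
   p = c ln n0 / |S_old|, so the expected sample size is mu = c ln n0.  At a
   fixed time, let D be the symmetric difference of S and S_old.  If the true
   change fraction |D| / |S_old| exceeds 1/3 while the sampled one is at most
   1/4, then the sample of S_old is empty, or it has at least 7/6 mu elements,
   or the sample of D (of mean more than mu/3 = 8/24 mu) has at most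
   1/4 * 7/6 mu = 7/24 mu elements.  Chernoff bounds give each of these events
   probability at most e^(-mu/720) = n0^(-c/720), and a union bound over the
   O(n0^gamma) times of the epoch concludes.
   When c ln n0 >= |S_old| every ID is sampled and the sampled fractions are
   the true ones. *)

Lemma exprn_le_expR (R : realType) (x : R) n :
  0 <= 1 + x -> (1 + x) ^+ n <= expR (n%:R * x).
Proof.
move=> x_ge; rewrite expRM_natl lerXn2r ?nnegrE ?expR_ge0 //; exact: expR_ge1Dx.
Qed.

Lemma ln_ge1_subV (R : realType) (z : R) : 0 < z -> 1 - z^-1 <= ln z.
Proof.
move=> z_gt0; have zV_gt0 : 0 < z^-1 by rewrite invr_gt0.
have /le_ln1Dx : -1 < z^-1 - 1 by lra.
by rewrite addrCA subrr addr0 lnV ?posrE //; lra.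
Qed.

Section Sampling.
Variables (R : realType) (T : finType).
Implicit Types (p r a k : R) (X Y : {set T}) (E : pred {set T}).

Definition sample_weight p X : R := p ^+ #|X| * (1 - p) ^+ (#|T| - #|X|).

Lemma sample_weight_ge0 p X : 0 <= p <= 1 -> 0 <= sample_weight p X.
Proof. by case/andP=> p_ge0 p_le1; rewrite mulr_ge0 ?exprn_ge0 ?subr_ge0. Qed.

Lemma sampleP_union (I : finType) p E (F : I -> pred {set T}) :
  0 <= p <= 1 -> (forall X, E X -> exists i, F i X) ->
  sampleP p E <= \sum_i sampleP p (F i).
Proof.
move=> p01 EF; rewrite /sampleP.
under [X in _ <= X]eq_bigr do rewrite big_mkcond.
rewrite exchange_big /= big_mkcond /=; apply: ler_sum => X _.
have sum_ge0 (P : pred I) :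
    0 <= \sum_(i | P i) (if F i X then sample_weight p X else 0).
  by apply: sumr_ge0 => i _; case: ifP => // _; exact: sample_weight_ge0.
case: ifP => EX; last exact: sum_ge0.
have [i FiX] := EF X EX.
by rewrite (bigD1 i) //= FiX lerDl sum_ge0.
Qed.

Lemma sample_pgf p r Y :
  \sum_X sample_weight p X * r ^+ #|Y :&: X| = (1 - p + p * r) ^+ #|Y|.
Proof.
have weight_prod X : sample_weight p X * r ^+ #|Y :&: X| =
    \prod_i (if i \in X then p * (if i \in Y then r else 1) else 1 - p).
  rewrite (bigID (mem X)) /= (eq_bigr (fun i => p * (if i \in Y then r else 1)));
    last by move=> i ->.
  rewrite [Z in _ = _ * Z](eq_bigr (fun=> 1 - p)); last by move=> i /negbTE ->.
  rewrite big_split /= -big_mkcondr /= !prodr_const /sample_weight.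
  have -> : #|[pred i in X | i \in Y]| = #|Y :&: X|.
    by apply: eq_card => i; rewrite !inE andbC.
  have -> : #|[pred i | i \notin X]| = (#|T| - #|X|)%N.
    by rewrite -(cardsC X) addKn; apply: eq_card => i; rewrite !inE.
  ring.
under eq_bigr do rewrite weight_prod.
rewrite -bigA_distr (bigID (mem Y)) /=.
rewrite (eq_bigr (fun=> 1 - p + p * r)) => [|i ->]; last ring.
by rewrite prodr_const big1 ?mulr1 // => i /negbTE ->; ring.
Qed.

Lemma sampleP_markov p r a Y E :
  0 <= p <= 1 -> 0 <= r -> 0 <= a ->
  (forall X, E X -> 1 <= a * r ^+ #|Y :&: X|) ->
  sampleP p E <= a * (1 - p + p * r) ^+ #|Y|.
Proof.
move=> p01 r_ge0 a_ge0 E_ge1.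
rewrite -sample_pgf mulr_sumr /sampleP [leRHS](bigID E) /= -[leLHS]addr0.
apply: lerD; last first.
  apply: sumr_ge0 => X _.
  by rewrite mulr_ge0 // mulr_ge0 ?sample_weight_ge0 ?exprn_ge0.
apply: ler_sum => X /E_ge1 ge1.
rewrite -/(sample_weight p X) mulrCA -[leLHS]mulr1.
by rewrite ler_wpM2l // sample_weight_ge0.
Qed.

Lemma sampleP_disjoint p Y E : 0 <= p <= 1 ->
  (forall X, E X -> Y :&: X = set0) -> sampleP p E <= expR (- (p * #|Y|%:R)).
Proof.
move=> p01 EY; apply: le_trans (@sampleP_markov p 0 1 Y E p01 _ _ _) _ => //.
  by move=> X /EY->; rewrite cards0 expr0 mulr1.
rewrite mul1r mulr0 addr0 mulrC -mulrN; apply: exprn_le_expR.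
by case/andP: p01 => _; rewrite subr_ge0.
Qed.

Lemma sampleP_chernoff p r k Y E : 0 <= p <= 1 -> 0 < r ->
  (forall X, E X -> k * ln r <= #|Y :&: X|%:R * ln r) ->
  sampleP p E <= expR (p * #|Y|%:R * (r - 1) - k * ln r).
Proof.
move=> p01 r_gt0 Ek.
pose a := expR (- (k * ln r)).
apply: le_trans (@sampleP_markov p r a Y E p01 (ltW r_gt0) _ _) _.
- exact: expR_ge0.
- move=> X /Ek Ek_X.
  rewrite -[r in r ^+ _]lnK // -expRM_natl -expRD -[leLHS]expR0 ler_expR; lra.
rewrite expRD mulrC ler_wpM2r ?expR_ge0 //.
have -> : 1 - p + p * r = 1 + p * (r - 1) by ring.
have -> : p * #|Y|%:R * (r - 1) = #|Y|%:R * (p * (r - 1)) by ring.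
apply: exprn_le_expR; case/andP: p01 => p_ge0 p_le1; nra.
Qed.

Lemma sampleP_upper_tail p Y E : 0 <= p <= 1 ->
  (forall X, E X -> 7 / 6 * (p * #|Y|%:R) <= #|Y :&: X|%:R) ->
  sampleP p E <= expR (- (p * #|Y|%:R) / 156).
Proof.
move=> p01 EY; set mu := p * #|Y|%:R.
have mu_ge0 : 0 <= mu by case/andP: p01 => p_ge0 _; rewrite mulr_ge0.
have ln_ge : 13^-1 <= ln (13 / 12 : R).
  by have := @ln_ge1_subV R (13 / 12); rewrite invf_div; lra.
apply: le_trans (@sampleP_chernoff p (13 / 12) (7 / 6 * mu) Y E p01 _ _) _.
- lra.
- move=> X /EY le_k; rewrite -/mu in le_k; nra.
rewrite ler_expR -/mu; nra.
Qed.

Lemma sampleP_lower_tail p mu Y E : 0 <= p <= 1 -> 0 <= mu ->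
  mu <= 3 * (p * #|Y|%:R) ->
  (forall X, E X -> #|Y :&: X|%:R <= 7 / 24 * mu) ->
  sampleP p E <= expR (- mu / 720).
Proof.
move=> p01 mu_ge0 mu_le EY.
have ln_ge : - 15^-1 <= ln (15 / 16 : R).
  by have := @ln_ge1_subV R (15 / 16); rewrite invf_div; lra.
have ln_nonpos : ln (15 / 16 : R) <= 0 by apply: ln_le0; lra.
apply: le_trans (@sampleP_chernoff p (15 / 16) (7 / 24 * mu) Y E p01 _ _) _.
- lra.
- by move=> X /EY; apply: ler_wnM2r.
rewrite ler_expR; nra.
Qed.

Lemma sampleP1 E : sampleP (1 : R) E = (E setT)%:R.
Proof.
have weight1 X : (1 : R) ^+ #|X| * (1 - 1) ^+ (#|T| - #|X|) = (X == setT)%:R.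
  by rewrite expr1n mul1r subrr expr0n subn_eq0 eqEcard subsetT cardsT.
rewrite /sampleP (eq_bigr _ (fun X _ => weight1 X)) big_mkcond (bigD1 setT) //=.
by rewrite eqxx big1 ?addr0 => [|X /negbTE->]; case: (E _).
Qed.
End Sampling.


Section Epoch.
Variables (R : realType) (T : finType).
Implicit Types (Sold S X A B : {set T}).

Definition symdiff A B : {set T} := (A :\: B) :|: (B :\: A).

Lemma card_symdiff A B : #|symdiff A B| = (#|A :\: B| + #|B :\: A|)%N.
Proof.
rewrite cardsU -[RHS]subn0; congr (_ - _)%N; apply/eqP; rewrite cards_eq0.
by apply/eqP/setP => x; rewrite !inE; case: (x \in A); case: (x \in B).
Qed.

Lemma symdiffIs A B X : symdiff A B :&: X = symdiff (A :&: X) (B :&: X).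
Proof.
apply/setP => x; rewrite !inE.
by case: (x \in A); case: (x \in B); case: (x \in X).
Qed.

Lemma fN_add_fL Sold S :
  fN R Sold S + fL R Sold S = #|symdiff S Sold|%:R / #|Sold|%:R.
Proof. by rewrite /fN /fL -mulrDl -natrD card_symdiff. Qed.

Lemma fN'_add_fL' X Sold S :
  fN' R X Sold S + fL' R X Sold S = #|symdiff S Sold :&: X|%:R / #|Sold :&: X|%:R.
Proof. by rewrite symdiffIs; apply: fN_add_fL. Qed.

Definition bad_at Sold S : pred {set T} :=
  [pred X | (fN' R X Sold S + fL' R X Sold S <= 1 / 4%:R) &&
            (1 / 3%:R < fN R Sold S + fL R Sold S)].

Lemma bad_epoch_bad_at (S : nat -> {set T}) Tend X :
  bad_epoch R S Tend X -> exists t : 'I_Tend.+1, bad_at (S 0%N) (S t) X.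
Proof. by case/existsP=> t /and3P[_ ? ?]; exists t; apply/andP. Qed.

Lemma bad_epoch_setT (S : nat -> {set T}) Tend : ~~ bad_epoch R S Tend setT.
Proof.
apply/negP => /bad_epoch_bad_at[t /andP[]].
by rewrite /fN' /fL' !setIT => ? ?; lra.
Qed.

Lemma sample_symdiff_cases (mu : R) Sold S X :
  fN' R X Sold S + fL' R X Sold S <= 1 / 4%:R ->
  [\/ Sold :&: X = set0, 7 / 6 * mu <= #|Sold :&: X|%:R
    | #|symdiff S Sold :&: X|%:R <= 7 / 24 * mu].
Proof.
rewrite fN'_add_fL'; have [->|] := eqVneq (Sold :&: X) set0; first by constructor.
rewrite -card_gt0 -(ltr0n R) => sample_gt0.
rewrite ler_pdivrMr // => small_ratio.
have [|large] := leP (7 / 6 * mu) #|Sold :&: X|%:R; first by constructor.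
by apply: Or33; lra.
Qed.

Lemma sampleP_bad_at (p : R) Sold S : 0 <= p <= 1 -> (0 < #|Sold|)%N ->
  sampleP p (bad_at Sold S) <= 3 * expR (- (p * #|Sold|%:R) / 720).
Proof.
move=> p01 Sold_gt0; set mu := p * #|Sold|%:R.
have mu_ge0 : 0 <= mu by case/andP: p01 => p_ge0 _; rewrite mulr_ge0.
have exp_ge0 : 0 <= expR (- mu / 720) := expR_ge0 _.
set change := fN R Sold S + fL R Sold S.
have [large_change|small_change] := boolP (1 / 3%:R < change); last first.
  rewrite /sampleP big_pred0 ?mulr_ge0 // => X.
  by rewrite /bad_at inE (negbTE small_change) andbF.
set D := symdiff S Sold.
have mu_le : mu <= 3 * (p * #|D|%:R).
  move: large_change; rewrite /change fN_add_fL ltr_pdivlMr ?ltr0n //.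
  by case/andP: p01 => p_ge0 _; rewrite /mu; nra.
pose EZ := [pred X | Sold :&: X == set0].
pose EU := [pred X | 7 / 6 * mu <= #|Sold :&: X|%:R].
pose EL := [pred X | #|D :&: X|%:R <= 7 / 24 * mu].
apply: le_trans (@sampleP_union _ _ 'I_3 p _ (nth pred0 [:: EZ; EU; EL]) p01 _) _.
  move=> X /andP[+ _] => /(sample_symdiff_cases mu)[/eqP EZ_X|EU_X|EL_X].
  - by exists (Ordinal (isT : 0 < 3)%N).
  - by exists (Ordinal (isT : 1 < 3)%N).
  - by exists (Ordinal (isT : 2 < 3)%N).
rewrite !big_ord_recl big_ord0 addr0 /=.
have boundZ : sampleP p EZ <= expR (- mu / 720).
  apply: le_trans (sampleP_disjoint (Y := Sold) p01 _) _; first by move=> X /eqP.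
  by rewrite ler_expR -/mu; lra.
have boundU : sampleP p EU <= expR (- mu / 720).
  apply: le_trans (sampleP_upper_tail (Y := Sold) p01 _) _; first by move=> X.
  by rewrite ler_expR -/mu; lra.
have boundL : sampleP p EL <= expR (- mu / 720).
  exact: sampleP_lower_tail p01 mu_ge0 mu_le _.
lra.
Qed.

End Epoch.

Lemma lifetime_powR_bound (R : realType) (gamma c' K c : R) (n Tend : nat) :
  0 <= gamma -> 0 <= K -> 720 * (gamma + c' + 1) <= c -> 3 * (K + 1) <= n%:R ->
  Tend%:R <= K * n%:R `^ gamma ->
  3 * Tend.+1%:R * n%:R `^ (- (c / 720)) <= n%:R `^ (- c').
Proof.
move=> gamma_ge0 K_ge0 c_ge n_ge Tend_le.
have n_ge1 : 1 <= n%:R :> R by lra.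
have n_neq0 : n%:R != 0 :> R by rewrite gt_eqF //; lra.
have pow_ge1 : 1 <= n%:R `^ gamma.
  by rewrite -[leLHS](powRr0 n%:R); exact: ler_powR.
have Tend1_le : Tend.+1%:R <= (K + 1) * n%:R `^ gamma.
  by rewrite -addn1 natrD; nra.
have nD x y : n%:R `^ (x + y) = n%:R `^ x * n%:R `^ y :> R.
  by rewrite powRD // n_neq0 implybT.
apply: (@le_trans _ _ (n%:R `^ (1 + gamma - c / 720))); last first.
  by apply: (ler_powR n_ge1); lra.
rewrite !nD powRr1 ?ler0n //; apply: ler_wpM2r; first exact: powR_ge0.
nra.
Qed.

Theorem lemma5 (R : realType) (gamma c' K : R) :
  1 <= gamma -> 0 < c' -> 0 < K ->
  exists c0 : R, forall c : R, c0 <= c ->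
  exists N : nat, forall (n0 : nat), (N <= n0)%N ->
  forall (T : finType) (S : nat -> {set T}) (Tend : nat),
    (* lifetime of O(n0^gamma) events *)
    Tend%:R <= K * (n0%:R `^ gamma) ->
    (* each step is a single join or departure event *)
    (forall t, (t < Tend)%N -> (#|(S t.+1 :\: S t) :|: (S t :\: S t.+1)| <= 1)%N) ->
    (* at least n0 (good) IDs present at all times *)
    (forall t, (t <= Tend)%N -> (n0 <= #|S t|)%N) ->
    sampleP (samp_prob c n0 (S 0%N)) (@bad_epoch R T S Tend)
      <= n0%:R `^ (- c').
Proof.
move=> gamma_ge1 c'_gt0 K_gt0.
exists (720 * (gamma + c' + 1)) => c c_ge.
exists (maxn 2 (Num.Def.trunc (3 * (K + 1))).+1) => n0.
rewrite geq_max => /andP[n0_ge2 n0_gt] T S Tend Tend_le _ n0_le.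
have n0_large : 3 * (K + 1) <= n0%:R :> R.
  by apply/ltW/(lt_le_trans (truncnS_gt _)); rewrite ler_nat.
have n0_neq0 : n0%:R != 0 :> R by rewrite pnatr_eq0 -lt0n (leq_trans _ n0_ge2).
have ln_gt0 : 0 < ln (n0%:R : R) by apply: ln_gt0; rewrite ltr1n.
have Sold_gt0 : (0 < #|S 0%N|)%N := leq_trans (ltnW n0_ge2) (n0_le 0%N (leq0n _)).
rewrite /samp_prob; case: (leP 1 (c * ln n0%:R / #|S 0%N|%:R)) => [_|p_lt1].
  by rewrite sampleP1 (negbTE (bad_epoch_setT _ _ _)) powR_ge0.
set p := c * _ / _ in p_lt1 *.
have p01 : 0 <= p <= 1.
  rewrite (ltW p_lt1) andbT divr_ge0 ?ler0n // mulr_ge0 ?ltW //; lra.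
apply: le_trans (sampleP_union p01 (@bad_epoch_bad_at R T S Tend)) _.
pose bound := 3 * expR (- (p * #|S 0%N|%:R) / 720).
apply: le_trans (_ : _ <= \sum_(t < Tend.+1) bound) _.
  by apply: ler_sum => t _; exact: sampleP_bad_at.
rewrite sumr_const card_ord -[leLHS]mulr_natr mulrC mulrA [_ * 3]mulrC.
have -> : p * #|S 0%N|%:R = c * ln (n0%:R) by rewrite divfK ?pnatr_eq0 -?lt0n.
have -> : - (c * ln n0%:R) / 720 = - (c / 720) * ln (n0%:R : R) by ring.
have -> : expR (- (c / 720) * ln n0%:R) = n0%:R `^ (- (c / 720)).
  by rewrite /powR (negbTE n0_neq0).
apply: lifetime_powR_bound c_ge n0_large Tend_le.
  exact: le_trans ler01 gamma_ge1.
exact: ltW.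
Qed.
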